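(* Let $(X,G)$ be an abstract real spectrum. For $a,b\in G$ define $a+b=D^t(a,b)$, $-a=(-1)\cdot a$, and let $\cdot$ be pointwise multiplication, $0$ and $1$ the constant functions. Then $(G,+,\cdot,-,0,1)$ is a real reduced multiring.
   Context: For a set $X$, $\{-1,0,1\}^X$ is a monoid under pointwise multiplication. An abstract real spectrum (ARS) is a pair $(X,G)$ such that: (AX1) $X$ is a non-empty set, $G$ is a submonoid of $\{-1,0,1\}^X$ containing the constant functions $-1,0,1$, and $G$ separates points of $X$. For $a,b\in G$, $D(a,b)$ is the set of $c\in G$ such that for all $x\in X$: $a(x)c(x)>0$ or $b(x)c(x)>0$ or $c(x)=0$; and $D^t(a,b)$ is the set of $c\in G$ such that for all $x\in X$: $a(x)c(x)>0$ or $b(x)c(x)>0$ or ($c(x)=0$ and $b(x)=-a(x)$). (AX2) If $P$ is a submonoid of $G$ with $P\cup -P=G$, $-1\notin P$, $a,b\in P\Rightarrow D(a,b)\subseteq P$, and $ab\in P\cap -P\Rightarrow a\in P\cap-P$ or $b\in P\cap -P$, then there is $x\in X$ with $P=\{a\in G:a(x)\ge 0\}$. (AX3) For all $a,b,c\in G$: if $p\in D^t(a,q)$ for some $q\in D^t(b,c)$, then $p\in D^t(r,c)$ for some $r\in D^t(a,b)$. A multiring is a tuple $(R,+,\cdot,-,0,1)$ with $+:R\times R\to\mathcal P(R)\setminus\{\emptyset\}$ satisfying: $z\in x+y\Rightarrow x\in z+(-y)$ and $y\in(-x)+z$; $y\in0+x\iff y=x$; $+$ associative (with $Z+w=\bigcup_{z\in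 Z}(z+w)$) and commutative; $(R,\cdot,1)$ a commutative monoid; $a0=0$; $c\in a+b\Rightarrow cd\in ad+bd$. A multiring $A$ is real reduced if $1\neq 0$ and for all $a,b,c,d\in A$: $a^3=a$; $c\in a+ab^2\Rightarrow c=a$; $c,d\in a^2+b^2\Rightarrow c=d$. *)

(* Elements of {-1,0,1}^X are represented as functions X -> Z
   taking values in {-1,0,1}; a submonoid G is a predicate on (X -> Z). *)
From Stdlib Require Import ZArith.
Open Scope Z_scope.

Definition cst {X : Type} (k : Z) : X -> Z := fun _ => k.
Definition pmul {X : Type} (a b : X -> Z) : X -> Z := fun x => a x * b x.
Definition pneg {X : Type} (a : X -> Z) : X -> Z := pmul (cst (-1)) a.

Definition sign_valued {X : Type} (f : X -> Z) : Prop :=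
  forall x, f x = -1 \/ f x = 0 \/ f x = 1.

Definition D {X : Type} (G : (X -> Z) -> Prop) (a b c : X -> Z) : Prop :=
  G c /\ forall x, a x * c x > 0 \/ b x * c x > 0 \/ c x = 0.

Definition Dt {X : Type} (G : (X -> Z) -> Prop) (a b c : X -> Z) : Prop :=
  G c /\ forall x, a x * c x > 0 \/ b x * c x > 0 \/ (c x = 0 /\ b x = - a x).

Definition AX1 (X : Type) (G : (X -> Z) -> Prop) : Prop :=
  inhabited X /\
  (forall g, G g -> sign_valued g) /\
  (forall a b, G a -> G b -> G (pmul a b)) /\
  G (cst (-1)) /\ G (cst 0) /\ G (cst 1) /\
  (forall x y : X, x <> y -> exists g, G g /\ g x <> g y).

Definition AX2 (X : Type) (G : (X -> Z) -> Prop) : Prop :=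
  forall P : (X -> Z) -> Prop,
    (forall a, P a -> G a) ->
    P (cst 1) ->
    (forall a b, P a -> P b -> P (pmul a b)) ->
    (forall g, G g -> P g \/ P (pneg g)) ->
    ~ P (cst (-1)) ->
    (forall a b c, P a -> P b -> D G a b c -> P c) ->
    (forall a b, G a -> G b -> P (pmul a b) -> P (pneg (pmul a b)) ->
        (P a /\ P (pneg a)) \/ (P b /\ P (pneg b))) ->
    exists x : X, forall a, P a <-> (G a /\ a x >= 0).

Definition AX3 (X : Type) (G : (X -> Z) -> Prop) : Prop :=
  forall a b c p, G a -> G b -> G c ->
    (exists q, Dt G b c q /\ Dt G a q p) ->
    exists r, Dt G a b r /\ Dt G r c p.

Definition ARS (X : Type) (G : (X -> Z) -> Prop) : Prop :=
  AX1 X G /\ AX2 X G /\ AX3 X G.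

(* Multiring whose carrier is the subset S of a type T; add x y z means
   z ∈ x + y. *)
Definition multiring_on {T : Type} (S : T -> Prop) (add : T -> T -> T -> Prop)
  (mul : T -> T -> T) (neg : T -> T) (zero one : T) : Prop :=
  S zero /\ S one /\
  (forall x y, S x -> S y -> S (mul x y)) /\
  (forall x, S x -> S (neg x)) /\
  (forall x y z, S x -> S y -> add x y z -> S z) /\
  (forall x y, S x -> S y -> exists z, add x y z) /\
  (forall x y z, S x -> S y -> S z -> add x y z ->
      add z (neg y) x /\ add (neg x) z y) /\
  (forall x y, S x -> S y -> (add zero x y <-> y = x)) /\
  (forall x y z w, S x -> S y -> S z -> S w ->
      ((exists u, S u /\ add x y u /\ add u z w) <->
       (exists v, S v /\ add y z v /\ add x v w))) /\
  (forall x y z, S x -> S y -> S z -> (add x y z <-> add y x z)) /\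
  (forall x y z, S x -> S y -> S z -> mul (mul x y) z = mul x (mul y z)) /\
  (forall x y, S x -> S y -> mul x y = mul y x) /\
  (forall x, S x -> mul x one = x) /\
  (forall a, S a -> mul a zero = zero) /\
  (forall a b c d, S a -> S b -> S c -> S d -> add a b c ->
      add (mul a d) (mul b d) (mul c d)).

Definition real_reduced_multiring_on {T : Type} (S : T -> Prop)
  (add : T -> T -> T -> Prop) (mul : T -> T -> T) (neg : T -> T)
  (zero one : T) : Prop :=
  multiring_on S add mul neg zero one /\
  one <> zero /\
  (forall a, S a -> mul a (mul a a) = a) /\
  (forall a b c, S a -> S b -> S c -> add a (mul a (mul b b)) c -> c = a) /\
  (forall a b c d, S a -> S b -> S c -> S d ->
      add (mul a a) (mul b b) c -> add (mul a a) (mul b b) d -> c = d).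

(* Apart from associativity and the nonemptiness of sums, every axiom of a
   real reduced multiring is a pointwise statement about values in {-1,0,1},
   checked by case analysis on the signs.  Associativity in one direction is
   exactly AX3, and the other direction follows using the commutativity of
   D^t.  A sum a + b is nonempty because a ∈ a + 0 and 0 ∈ b + (-b), so AX3
   yields some r ∈ a + b. *)
From Stdlib Require Import ZArith Lia FunctionalExtensionality.
Open Scope Z_scope.

Definition is_sign (z : Z) : Prop := z = -1 \/ z = 0 \/ z = 1.

Definition tsum (a b c : Z) : Prop := a * c > 0 \/ b * c > 0 \/ (c = 0 /\ b = - a).

Ltac sign_cases :=
  repeat match goal with H : is_sign _ |- _ => destruct H as [-> | [-> | ->]] end.

Lemma tsum_comm a b c : is_sign a -> is_sign b -> is_sign c ->
  tsum a b c -> tsum b a c.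
Proof. unfold tsum; intros; sign_cases; lia. Qed.

Lemma tsum_reverse a b c : is_sign a -> is_sign b -> is_sign c ->
  tsum a b c -> tsum c (- b) a.
Proof. unfold tsum; intros; sign_cases; lia. Qed.

Lemma tsum_0l a c : is_sign a -> is_sign c -> tsum 0 a c -> c = a.
Proof. unfold tsum; intros; sign_cases; lia. Qed.

Lemma tsum_mulr a b c d : is_sign a -> is_sign b -> is_sign c -> is_sign d ->
  tsum a b c -> tsum (a * d) (b * d) (c * d).
Proof. unfold tsum; intros; sign_cases; lia. Qed.

Lemma sign_cube a : is_sign a -> a * (a * a) = a.
Proof. intros; sign_cases; lia. Qed.

Lemma tsum_absorb a b c : is_sign a -> is_sign b -> is_sign c ->
  tsum a (a * (b * b)) c -> c = a.
Proof. unfold tsum; intros; sign_cases; lia. Qed.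

Lemma tsum_squares_unique a b c d :
  is_sign a -> is_sign b -> is_sign c -> is_sign d ->
  tsum (a * a) (b * b) c -> tsum (a * a) (b * b) d -> c = d.
Proof. unfold tsum; intros; sign_cases; lia. Qed.

Lemma tsum_0l_refl (a : Z) : tsum 0 a a.
Proof. unfold tsum; nia. Qed.

Lemma tsum_opp_0 (b : Z) : tsum b (- b) 0.
Proof. unfold tsum; lia. Qed.

Lemma pneg_apply {X : Type} (a : X -> Z) (x : X) : pneg a x = - a x.
Proof. unfold pneg, pmul, cst; lia. Qed.

Section SumsOfSignFunctions.

Variables (X : Type) (G : (X -> Z) -> Prop).
Hypothesis G_sign : forall g, G g -> sign_valued g.
Hypothesis G_mul : forall a b, G a -> G b -> G (pmul a b).
Hypothesis G_m1 : G (cst (-1)).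
Hypothesis G_0 : G (cst 0).

Lemma G_sign_at (g : X -> Z) (x : X) : G g -> is_sign (g x).
Proof. intros Gg; exact (G_sign g Gg x). Qed.

Lemma G_pneg (a : X -> Z) : G a -> G (pneg a).
Proof. now intros; apply G_mul. Qed.

#[local] Hint Resolve G_sign_at G_pneg : core.

Lemma Dt_comm (a b c : X -> Z) : G a -> G b -> Dt G a b c -> Dt G b a c.
Proof.
  intros Ga Gb [Gc Habc]; split; [exact Gc|].
  intro x; apply tsum_comm; auto; apply Habc.
Qed.

Lemma Dt_reverse (a b c : X -> Z) :
  G a -> G b -> Dt G a b c -> Dt G c (pneg b) a.
Proof.
  intros Ga Gb [Gc Habc]; split; [exact Ga|].
  intro x; rewrite pneg_apply; apply tsum_reverse; auto; apply Habc.
Qed.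

Lemma Dt_reverse_l (a b c : X -> Z) :
  G a -> G b -> Dt G a b c -> Dt G (pneg a) c b.
Proof.
  intros Ga Gb Habc; apply Dt_comm; auto.
  - apply Habc.
  - apply Dt_reverse, Dt_comm; auto.
Qed.

Lemma Dt_0l (a c : X -> Z) : G a -> Dt G (cst 0) a c <-> c = a.
Proof.
  intros Ga; split.
  - intros [Gc Hac]; apply functional_extensionality; intro x.
    apply tsum_0l; auto; apply Hac.
  - intros ->; split; [exact Ga|]; intro x; apply tsum_0l_refl.
Qed.

Lemma Dt_0r (a : X -> Z) : G a -> Dt G a (cst 0) a.
Proof. intros Ga; apply Dt_comm; auto; now apply Dt_0l. Qed.

Lemma Dt_opp_0 (b : X -> Z) : Dt G b (pneg b) (cst 0).
Proof. split; [exact G_0|]; intro x; rewrite pneg_apply; apply tsum_opp_0. Qed.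

Lemma Dt_mulr (a b c d : X -> Z) :
  G a -> G b -> G d -> Dt G a b c -> Dt G (pmul a d) (pmul b d) (pmul c d).
Proof.
  intros Ga Gb Gd [Gc Habc]; split; [now apply G_mul|].
  intro x; apply tsum_mulr; auto; apply Habc.
Qed.

Lemma pmul_cube (a : X -> Z) : G a -> pmul a (pmul a a) = a.
Proof.
  intros Ga; apply functional_extensionality; intro x; apply sign_cube; auto.
Qed.

Lemma Dt_absorb (a b c : X -> Z) :
  G a -> G b -> Dt G a (pmul a (pmul b b)) c -> c = a.
Proof.
  intros Ga Gb [Gc Habc]; apply functional_extensionality; intro x.
  apply (tsum_absorb (a x) (b x)); auto; apply Habc.
Qed.

Lemma Dt_squares_unique (a b c d : X -> Z) :
  G a -> G b -> Dt G (pmul a a) (pmul b b) c -> Dt G (pmul a a) (pmul b b) d ->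
  c = d.
Proof.
  intros Ga Gb [Gc Hc] [Gd Hd]; apply functional_extensionality; intro x.
  apply (tsum_squares_unique (a x) (b x)); auto; [apply Hc | apply Hd].
Qed.

Hypothesis G_assoc : AX3 X G.

Lemma Dt_nonempty (a b : X -> Z) : G a -> G b -> exists c, Dt G a b c.
Proof.
  intros Ga Gb.
  destruct (G_assoc a b (pneg b) a) as [r [Hr _]]; auto.
  - exists (cst 0); split; [apply Dt_opp_0 | now apply Dt_0r].
  - now exists r.
Qed.

Lemma Dt_assoc (a b c w : X -> Z) : G a -> G b -> G c ->
  (exists u, G u /\ Dt G a b u /\ Dt G u c w) <->
  (exists v, G v /\ Dt G b c v /\ Dt G a v w).
Proof.
  intros Ga Gb Gc; split.
  - intros [u [Gu [Hu Hw]]].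
    destruct (G_assoc c b a w) as [r [Hr Hw']]; auto.
    + exists u; split; apply Dt_comm; auto.
    + assert (Gr : G r) by apply Hr.
      exists r; split; [exact Gr|]; split; apply Dt_comm; auto.
  - intros [v [Gv [Hv Hw]]].
    destruct (G_assoc a b c w) as [r [Hr Hw']]; eauto.
    exists r; split; [apply Hr | auto].
Qed.

End SumsOfSignFunctions.

Lemma pmulA {X : Type} (a b c : X -> Z) : pmul (pmul a b) c = pmul a (pmul b c).
Proof. apply functional_extensionality; intro; unfold pmul; ring. Qed.

Lemma pmulC {X : Type} (a b : X -> Z) : pmul a b = pmul b a.
Proof. apply functional_extensionality; intro; unfold pmul; ring. Qed.

Lemma pmul1 {X : Type} (a : X -> Z) : pmul a (cst 1) = a.
Proof. apply functional_extensionality; intro; unfold pmul, cst; ring. Qed.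

Lemma pmul0 {X : Type} (a : X -> Z) : pmul a (cst 0) = cst 0.
Proof. apply functional_extensionality; intro; unfold pmul, cst; ring. Qed.

Lemma cst_inj {X : Type} (x0 : X) (k l : Z) : @cst X k = cst l -> k = l.
Proof. intros E; exact (f_equal (fun f => f x0) E). Qed.

Theorem theorem4p3 (X : Type) (G : (X -> Z) -> Prop) :
  ARS X G ->
  real_reduced_multiring_on G (Dt G) pmul pneg (cst 0) (cst 1).
Proof.
  intros [[[x0] [Hsign [Hmul [Hm1 [H0 [H1 _]]]]]] [_ Hassoc]].
  unfold real_reduced_multiring_on, multiring_on.
  repeat match goal with |- _ /\ _ => split end.
  - exact H0.
  - exact H1.
  - exact Hmul.
  - intros a Ga; now apply G_pneg.
  - intros a b c _ _ [Gc _]; exact Gc.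
  - intros a b Ga Gb; now apply Dt_nonempty.
  - intros a b c Ga Gb Gc Habc; split; [now apply Dt_reverse | now apply Dt_reverse_l].
  - intros a b Ga Gb; now apply Dt_0l.
  - intros a b c w Ga Gb Gc Gw; now apply Dt_assoc.
  - intros a b c Ga Gb Gc; split; now apply Dt_comm.
  - intros a b c _ _ _; apply pmulA.
  - intros a b _ _; apply pmulC.
  - intros a _; apply pmul1.
  - intros a _; apply pmul0.
  - intros a b c d Ga Gb Gc Gd; now apply Dt_mulr.
  - intros E; discriminate (cst_inj x0 1 0 E).
  - intros a Ga; eapply pmul_cube; eauto.
  - intros a b c Ga Gb Gc; eapply Dt_absorb; eauto.
  - intros a b c d Ga Gb Gc Gd; eapply Dt_squares_unique; eauto.
Qed.
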